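(* Let ${\cal H}_B,{\cal H}_C$ have dimensions $d_B\le d_C$. Let $(\varphi_i,M_i)_{i=1}^N$ consist of pure states $\ket{\varphi_i}\in{\cal H}_B\otimes{\cal H}_C$ with $E(\varphi_i)\ge\log d_B-\delta$ for all $i$ (some $\delta\ge0$), and a POVM $(M_i)_{i=1}^N$ all of whose elements are PPT, such that $\tr(\varphi_iM_i)\ge1-\epsilon$ for all $i$. If $\epsilon+\sqrt2\,\delta^{1/4}<1$, then $$N\le\bigl(1-\epsilon-\sqrt2\,\delta^{1/4}\bigr)^{-1}d_C.$$
   Context: Logarithms are base 2. $E(\varphi)=S(\tr_C\varphi)$ for pure $\varphi$. An operator $M$ on ${\cal H}_B\otimes{\cal H}_C$ is PPT if its partial transpose $M^\Gamma$ (with respect to a fixed product basis: $\ket{ij}\bra{kl}\mapsto\ket{il}\bra{kj}$) is positive semidefinite. *)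

From HB Require Import structures.
From mathcomp Require Import all_boot all_order all_algebra.
From mathcomp Require Import sesquilinear spectral.
From mathcomp Require Import complex.
From mathcomp Require Import reals exp.
Set Implicit Arguments.
Unset Strict Implicit.
Unset Printing Implicit Defensive.
Import Order.TTheory GRing.Theory Num.Theory.
Local Open Scope ring_scope.

Section QDefs.
Variable R : realType.
Local Notation C := R[i].

Definition log2 (x : R) : R := ln x / ln 2.

Definition xlogx (x : R) : R := if x == 0 then 0 else x * log2 x.

Definition adj m n (A : 'M[C]_(m, n)) : 'M[C]_(n, m) := (map_mx Num.conj A)^T.

(** Von Neumann entropy S(rho) = - sum_k lambda_k log lambda_k, with the
    eigenvalues lambda_k of rho given by the spectral decomposition of the
    (normal) matrix rho (mathcomp spectral.v). *)
Definition vN_entropy n (rho : 'M[C]_n) : R :=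
  - \sum_(k < n) xlogx (complex.Re (spectral_diag rho 0 k)).

Variables dB dC : nat.

(** Basis |i j> = |i>_B (x) |j>_C of H_B (x) H_C, as an index of 'I_(dB*dC). *)
Definition tidx (i : 'I_dB) (j : 'I_dC) : 'I_(dB * dC) := mxvec_index i j.

Definition untidx (p : 'I_(dB * dC)) : 'I_dB * 'I_dC :=
  enum_val (cast_ord (esym (mxvec_cast dB dC)) p).

Definition ptraceC (X : 'M[C]_(dB * dC)) : 'M[C]_dB :=
  \matrix_(i, k) \sum_(j < dC) X (tidx i j) (tidx k j).

(** Partial transpose w.r.t. the fixed product basis:
    |ij><kl|  |->  |il><kj|, i.e. X^Gamma_{(i,l),(k,j)} = X_{(i,j),(k,l)}. *)
Definition ptranspose (X : 'M[C]_(dB * dC)) : 'M[C]_(dB * dC) :=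
  \matrix_(p, q) X (tidx (untidx p).1 (untidx q).2) (tidx (untidx q).1 (untidx p).2).

Definition proj (phi : 'cV[C]_(dB * dC)) : 'M[C]_(dB * dC) := phi *m adj phi.

Definition ent_entropy (phi : 'cV[C]_(dB * dC)) : R :=
  vN_entropy (ptraceC (proj phi)).

Definition unit_ket (phi : 'cV[C]_(dB * dC)) : Prop := adj phi *m phi = 1%:M.

End QDefs.

(** Positive semidefinite: <v, M v> >= 0 for all v (order of the
    numClosedField C: real and nonnegative). *)
Definition psdmx (R : realType) n (M : 'M[R[i]]_n) : Prop :=
  forall v : 'cV[R[i]]_n, 0 <= (adj v *m M *m v) 0 0.

Definition PPT (R : realType) dB dC (M : 'M[R[i]]_(dB * dC)) : Prop :=
  psdmx (ptranspose M).

Definition POVM (R : realType) n N (M : 'I_N -> 'M[R[i]]_n) : Prop :=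
  (forall k, psdmx (M k)) /\ \sum_(k < N) M k = 1%:M.

(* Each phi_k is compared with the maximally entangled state Phi_k built on its
   Schmidt bases.  For a PPT operator M, positivity of the partial transpose
   together with Bessel's inequality gives <Phi|M|Phi> <= tr M / d_B.  Entropy
   at least log d_B - delta forces the Schmidt coefficients lambda_s to be almost
   uniform, d_B (1 - delta) <= (sum_s sqrt lambda_s)^2, i.e. the overlap F of phi
   and Phi satisfies F^2 >= 1 - delta; writing phi = F Phi + y and using
   Cauchy-Schwarz for 0 <= M <= 1 then gives
   <phi|M|phi> <= tr M / d_B + 2 sqrt delta <= tr M / d_B + sqrt 2 delta^(1/4).
   Summing over k, with sum_k tr M_k = d_B d_C, yields
   N (1 - eps) <= d_C + N sqrt 2 delta^(1/4). *)

From HB Require Import structures.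
From mathcomp Require Import all_boot all_order all_algebra.
From mathcomp Require Import sesquilinear spectral complex.
From mathcomp Require Import reals exp.
From mathcomp Require Import ring lra.
Set Implicit Arguments.
Unset Strict Implicit.
Unset Printing Implicit Defensive.
Import Order.TTheory GRing.Theory Num.Theory.
Local Open Scope ring_scope.

HB.lock Definition braket (R : realType) n (x : 'cV[R[i]]_n) (A : 'M[R[i]]_n)
  (y : 'cV[R[i]]_n) : R[i] := (adj x *m A *m y) 0 0.

Section Braket.
Variable R : realType.
Local Notation C := R[i].
Local Notation "x %:C" := ((x%:C)%C : C) : ring_scope.

Lemma Re_realM (a : R) (x : C) : complex.Re (a%:C * x) = a * complex.Re x.
Proof. by case: x => u v /=; rewrite !mul0r subr0. Qed.

Lemma Re_ge0 (x : C) : 0 <= x -> 0 <= complex.Re x.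
Proof. by rewrite lecE => /andP[]. Qed.

Lemma conj_realC (a : R) : (a%:C)^* = a%:C.
Proof. exact: conjc_real. Qed.

Lemma ge0_ReK (x : C) : 0 <= x -> (complex.Re x)%:C = x.
Proof. by case: x => a b; rewrite lecE /= => /andP[/eqP -> _]. Qed.

Definition inner n (x y : 'cV[C]_n) : C := braket x 1%:M y.

Lemma psdmxP n (A : 'M[C]_n) : psdmx A <-> forall v, 0 <= braket v A v.
Proof. by rewrite braket.unlock. Qed.

Lemma psd_Re_braket_ge0 n (A : 'M[C]_n) v : psdmx A -> 0 <= complex.Re (braket v A v).
Proof. by move=> /psdmxP /(_ v) /Re_ge0. Qed.

Lemma braketE n (x : 'cV[C]_n) A y :
  braket x A y = \sum_p \sum_q (x p 0)^* * A p q * y q 0.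
Proof.
rewrite braket.unlock mxE; under eq_bigr => q _ do rewrite mxE big_distrl /=.
rewrite exchange_big /=; apply: eq_bigr => p _; apply: eq_bigr => q _.
by rewrite /adj !mxE.
Qed.

Lemma braketDl n (x1 x2 : 'cV[C]_n) A y :
  braket (x1 + x2) A y = braket x1 A y + braket x2 A y.
Proof.
rewrite !braketE -big_split; apply: eq_bigr => p _; rewrite -big_split.
by apply: eq_bigr => q _; rewrite mxE rmorphD /= !mulrDl.
Qed.

Lemma braketDr n (x : 'cV[C]_n) A y1 y2 :
  braket x A (y1 + y2) = braket x A y1 + braket x A y2.
Proof.
rewrite !braketE -big_split; apply: eq_bigr => p _; rewrite -big_split.
by apply: eq_bigr => q _; rewrite mxE !mulrDr.
Qed.

Lemma braketZl n a (x : 'cV[C]_n) A y : braket (a *: x) A y = a^* * braket x A y.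
Proof.
rewrite !braketE mulr_sumr; apply: eq_bigr => p _; rewrite mulr_sumr.
by apply: eq_bigr => q _; rewrite mxE rmorphM /= !mulrA.
Qed.

Lemma braketZr n a (x : 'cV[C]_n) A y : braket x A (a *: y) = a * braket x A y.
Proof.
rewrite !braketE mulr_sumr; apply: eq_bigr => p _; rewrite mulr_sumr.
by apply: eq_bigr => q _; rewrite mxE mulrCA.
Qed.

Lemma braketBl n (x1 x2 : 'cV[C]_n) A y :
  braket (x1 - x2) A y = braket x1 A y - braket x2 A y.
Proof. by rewrite braketDl -scaleN1r braketZl rmorphN rmorph1 mulN1r. Qed.

Lemma braketBr n (x : 'cV[C]_n) A y1 y2 :
  braket x A (y1 - y2) = braket x A y1 - braket x A y2.
Proof. by rewrite braketDr -scaleN1r braketZr mulN1r. Qed.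

Lemma braket_suml n I (r : seq I) (P : pred I) (x : I -> 'cV[C]_n) A y :
  braket (\sum_(i <- r | P i) x i) A y = \sum_(i <- r | P i) braket (x i) A y.
Proof.
have braket0l : braket 0 A y = 0 by rewrite -(scale0r 0) braketZl rmorph0 mul0r.
exact: (big_morph (fun z => braket z A y) (fun a b => braketDl a b A y) braket0l).
Qed.

Lemma braket_sumr n I (r : seq I) (P : pred I) (y : I -> 'cV[C]_n) A x :
  braket x A (\sum_(i <- r | P i) y i) = \sum_(i <- r | P i) braket x A (y i).
Proof.
have braket0r : braket x A 0 = 0 by rewrite -(scale0r 0) braketZr mul0r.
exact: (big_morph (fun z => braket x A z) (braketDr x A) braket0r).
Qed.

Lemma braket_summx n I (r : seq I) (P : pred I) (A : I -> 'M[C]_n) x y :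
  braket x (\sum_(i <- r | P i) A i) y = \sum_(i <- r | P i) braket x (A i) y.
Proof. by rewrite braket.unlock mulmx_sumr mulmx_suml summxE. Qed.

Lemma braketBmx n (x : 'cV[C]_n) A1 A2 y :
  braket x (A1 - A2) y = braket x A1 y - braket x A2 y.
Proof. by rewrite braket.unlock mulmxBr mulmxBl mxE [X in _ + X]mxE. Qed.

Lemma braket_trace n (x : 'cV[C]_n) A : braket x A x = \tr (x *m adj x *m A).
Proof. by rewrite braket.unlock -trace_mx11 mxtrace_mulC !mulmxA. Qed.

Lemma innerE n (x y : 'cV[C]_n) : inner x y = \sum_p (x p 0)^* * y p 0.
Proof.
rewrite /inner braketE; apply: eq_bigr => p _; rewrite (bigD1 p) //= big1 ?addr0.
  by rewrite mxE eqxx mulr1.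
by move=> q /negbTE nq; rewrite mxE eq_sym nq mulr0 mul0r.
Qed.

Lemma innerZl n a (x y : 'cV[C]_n) : inner (a *: x) y = a^* * inner x y.
Proof. exact: braketZl. Qed.

Lemma innerZr n a (x y : 'cV[C]_n) : inner x (a *: y) = a * inner x y.
Proof. exact: braketZr. Qed.

Lemma inner_conj n (x y : 'cV[C]_n) : inner y x = (inner x y)^*.
Proof.
rewrite !innerE rmorph_sum; apply: eq_bigr => p _.
by rewrite rmorphM /= conjCK mulrC.
Qed.

Lemma inner_ge0 n (x : 'cV[C]_n) : 0 <= inner x x.
Proof. by rewrite innerE; apply: sumr_ge0 => p _; rewrite mulrC mulcJ_ge0. Qed.

Lemma inner_eq0 n (x : 'cV[C]_n) : (inner x x == 0) = (x == 0).
Proof.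
apply/idP/eqP => [|->]; last by rewrite innerE big1 // => p _; rewrite mxE mulr0.
rewrite innerE psumr_eq0 => [/allP x0|p _]; last by rewrite mulrC mulcJ_ge0.
apply/matrixP => p j; rewrite ord1 mxE.
by have := x0 p (mem_index_enum p); rewrite /= mulf_eq0 conjC_eq0 orbb => /eqP.
Qed.

Lemma unit_ket_inner n (x : 'cV[C]_n) : adj x *m x = 1%:M -> inner x x = 1.
Proof. by rewrite /inner braket.unlock mulmx1 => ->; rewrite mxE. Qed.

Lemma psdmx_sum n I (r : seq I) (P : pred I) (A : I -> 'M[C]_n) :
  (forall i, P i -> psdmx (A i)) -> psdmx (\sum_(i <- r | P i) A i).
Proof.
move=> A_psd; apply/psdmxP => v; rewrite braket_summx.
by apply: sumr_ge0 => i /A_psd /psdmxP.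
Qed.

Lemma braket_le_inner n (A : 'M[C]_n) x :
  psdmx (1%:M - A) -> complex.Re (braket x A x) <= complex.Re (inner x x).
Proof.
by move=> /psdmxP /(_ x) /Re_ge0; rewrite braketBmx raddfB subr_ge0.
Qed.

Lemma braket_le1 n (A : 'M[C]_n) x :
  inner x x = 1 -> psdmx (1%:M - A) -> complex.Re (braket x A x) <= 1.
Proof. by move=> x1 /(braket_le_inner x); rewrite x1. Qed.

End Braket.

Section Adjoint.
Variable R : realType.
Local Notation C := R[i].

Lemma adjmxM m n p (A : 'M[C]_(m, n)) (B : 'M[C]_(n, p)) :
  adj (A *m B) = adj B *m adj A.
Proof. by rewrite /adj map_mxM trmx_mul. Qed.

Lemma adjmxK m n (A : 'M[C]_(m, n)) : adj (adj A) = A.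
Proof. by apply/matrixP => i j; rewrite /adj !mxE conjCK. Qed.

Lemma adjmxB m n (A B : 'M[C]_(m, n)) : adj (A - B) = adj A - adj B.
Proof. by apply/matrixP => i j; rewrite /adj !mxE rmorphB. Qed.

Lemma adjmx1 n : adj (1%:M : 'M[C]_n) = 1%:M.
Proof. by apply/matrixP => i j; rewrite /adj !mxE eq_sym rmorphMn rmorph1. Qed.

Lemma adjmx_sum m n I (r : seq I) (P : pred I) (F : I -> 'M[C]_(m, n)) :
  adj (\sum_(i <- r | P i) F i) = \sum_(i <- r | P i) adj (F i).
Proof.
by apply/matrixP => i j; rewrite /adj !mxE !summxE rmorph_sum; apply: eq_bigr => k _; rewrite !mxE.
Qed.

Lemma adjmx_trmx m n (A : 'M[C]_(m, n)) : map_mx Num.conj (A^T) = adj A.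
Proof. by rewrite /adj map_trmx. Qed.

End Adjoint.

Section Bessel.
Variable R : realType.
Local Notation C := R[i].

Definition orthonormal (I : finType) n (e : I -> 'cV[C]_n) : Prop :=
  forall a b, inner (e a) (e b) = (a == b)%:R.

Definition orthonormal_or_zero (I : finType) n (e : I -> 'cV[C]_n) : Prop :=
  forall a b, inner (e a) (e b) = ((a == b) && (e a != 0))%:R.

Lemma inner_mx11 n (x y : 'cV[C]_n) : adj x *m y = (inner x y)%:M.
Proof. by rewrite {1}[adj x *m y]mx11_scalar /inner braket.unlock mulmx1. Qed.

Lemma psdmx_trace_ge0 n (K P : 'M[C]_n) : psdmx K -> 0 <= \tr (adj P *m K *m P).
Proof.
move=> K_psd; apply: sumr_ge0 => j _.
have -> : (adj P *m K *m P) j j = braket (col j P) K (col j P).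
  rewrite braketE mxE; under eq_bigr => q _ do rewrite mxE big_distrl /=.
  rewrite exchange_big /=; apply: eq_bigr => p _; apply: eq_bigr => q _.
  by rewrite /adj !mxE.
exact: (psdmxP _).1.
Qed.

(* The projector Q onto the span of e splits tr K as tr (Q K) + tr ((1 - Q) K). *)
Lemma bessel_psd n (I : finType) (e : I -> 'cV[C]_n) (K : 'M[C]_n) :
  psdmx K -> orthonormal_or_zero e ->
  \sum_a complex.Re (braket (e a) K (e a)) <= complex.Re (\tr K).
Proof.
move=> K_psd e_on.
pose Q := \sum_a e a *m adj (e a).
have QQ : Q *m Q = Q.
  have eE a b : e a *m adj (e a) *m (e b *m adj (e b)) =
      (a == b)%:R *: (e a *m adj (e a)).
    rewrite mulmxA -(mulmxA (e a)) inner_mx11 e_on mul_mx_scalar -scalemxAl.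
    have [-> /=|ea_ne0] := eqVneq (e a) 0; first by rewrite !mul0mx !scaler0.
    by case: eqVneq => [<-|_]; rewrite ?scale1r ?scale0r.
  rewrite /Q mulmx_suml; apply: eq_bigr => a _; rewrite mulmx_sumr.
  rewrite (bigD1 a) //= big1 ?addr0 => [|b /negbTE ba]; first by rewrite eE eqxx scale1r.
  by rewrite eE eq_sym ba scale0r.
have adjQ : adj Q = Q by rewrite adjmx_sum; apply: eq_bigr => a _; rewrite adjmxM adjmxK.
pose P := 1%:M - Q.
have PP : P *m P = P by rewrite mulmxBl mul1mx mulmxBr mulmx1 QQ subrr subr0.
have adjP : adj P = P by rewrite adjmxB adjmx1 adjQ.
have trQK : \sum_a braket (e a) K (e a) = \tr (Q *m K).
  by rewrite mulmx_suml raddf_sum; apply: eq_bigr => a _; exact: braket_trace.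
have trPK : 0 <= \tr (P *m K).
  by rewrite -PP -mulmxA mxtrace_mulC -{1}adjP psdmx_trace_ge0.
have -> : \tr K = \tr (Q *m K) + \tr (P *m K).
  by rewrite mulmxBl mul1mx raddfB /= addrC subrK.
by rewrite -raddf_sum trQK raddfD /= lerDl Re_ge0.
Qed.

End Bessel.

Section Tensor.
Variable R : realType.
Local Notation C := R[i].
Variables dB dC : nat.

Lemma untidxK (i : 'I_dB) (j : 'I_dC) : untidx (tidx i j) = (i, j).
Proof. by rewrite /untidx /tidx /mxvec_index cast_ordK enum_rankK. Qed.

Lemma sum_tidx (F : 'I_(dB * dC) -> C) :
  \sum_p F p = \sum_i \sum_j F (tidx i j).
Proof.
rewrite (reindex _ (curry_mxvec_bij _ _)) /= pair_bigA /=.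
by apply: eq_bigr => [[i j]] _.
Qed.

Lemma cV_tidxP (x y : 'cV[C]_(dB * dC)) :
  (forall i j, x (tidx i j) 0 = y (tidx i j) 0) -> x = y.
Proof.
move=> xy; apply/matrixP => p k; rewrite ord1.
by case/mxvec_indexP: p => i j; exact: xy.
Qed.

Definition tensorv (a : 'cV[C]_dB) (b : 'cV[C]_dC) : 'cV[C]_(dB * dC) :=
  \col_p (a (untidx p).1 0 * b (untidx p).2 0).

Lemma tensorvE a b i j : tensorv a b (tidx i j) 0 = a i 0 * b j 0.
Proof. by rewrite /tensorv mxE untidxK. Qed.

Lemma inner_tensorv a b c d :
  inner (tensorv a b) (tensorv c d) = inner a c * inner b d.
Proof.
rewrite !innerE sum_tidx big_distrl; apply: eq_bigr => i _ /=.
rewrite big_distrr; apply: eq_bigr => j _ /=.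
by rewrite !tensorvE rmorphM /=; ring.
Qed.

Lemma tensorvZr a k b : tensorv a (k *: b) = k *: tensorv a b.
Proof. by apply/matrixP => p j; rewrite !mxE mulrCA. Qed.

Lemma tensorv_eq0 a b : (tensorv a b == 0) = (a == 0) || (b == 0).
Proof. by rewrite -!inner_eq0 inner_tensorv mulf_eq0. Qed.

Lemma orthonormal_or_zero_tensorv (I J : finType) (v : I -> 'cV[C]_dB)
    (w : J -> 'cV[C]_dC) : orthonormal v -> orthonormal_or_zero w ->
  orthonormal_or_zero (fun ij : I * J => tensorv (v ij.1) (w ij.2)).
Proof.
move=> v_on w_on [i j] [i' j'] /=; rewrite inner_tensorv v_on w_on xpair_eqE.
have v_ne0 : v i != 0 by rewrite -inner_eq0 v_on eqxx oner_eq0.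
rewrite tensorv_eq0 (negbTE v_ne0) /=.
by case: (i == i'); rewrite ?mul1r ?mul0r.
Qed.

Lemma inner_sum_tensorv (I : finType) (v : I -> 'cV[C]_dB) (b c : I -> 'cV[C]_dC) :
  orthonormal v ->
  inner (\sum_s tensorv (v s) (b s)) (\sum_t tensorv (v t) (c t)) =
  \sum_s inner (b s) (c s).
Proof.
move=> v_on; rewrite /inner braket_suml; apply: eq_bigr => s _.
rewrite braket_sumr (bigD1 s) //= big1 => [|t ts].
  by rewrite addr0 -/(inner _ _) inner_tensorv v_on eqxx mul1r.
by rewrite -/(inner _ _) inner_tensorv v_on eq_sym (negbTE ts) mul0r.
Qed.

Definition conjv n (x : 'cV[C]_n) : 'cV[C]_n := map_mx Num.conj x.

Lemma braket_ptranspose a b c d (M : 'M[C]_(dB * dC)) :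
  braket (tensorv a b) M (tensorv c d) =
  braket (tensorv a (conjv d)) (ptranspose M) (tensorv c (conjv b)).
Proof.
rewrite !braketE !sum_tidx; apply: eq_bigr => i _.
under eq_bigr => j _ do rewrite sum_tidx.
under [RHS]eq_bigr => l _ do rewrite sum_tidx.
rewrite exchange_big; under eq_bigr => j _ do rewrite exchange_big.
rewrite exchange_big; apply: eq_bigr => l _; apply: eq_bigr => k _.
apply: eq_bigr => j _.
rewrite !tensorvE /ptranspose /conjv !mxE !untidxK /= !rmorphM /= conjCK.
ring.
Qed.

(* Positivity of M^Gamma on x s t - x t s, with x s t := v s (x) conj (w t). *)
Lemma ppt_braket_sum_le (I : finType) (v : I -> 'cV[C]_dB) (w : I -> 'cV[C]_dC)
    (M : 'M[C]_(dB * dC)) : psdmx (ptranspose M) ->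
  \sum_s \sum_t complex.Re (braket (tensorv (v s) (w s)) M (tensorv (v t) (w t))) <=
  \sum_s \sum_t complex.Re (braket (tensorv (v s) (w t)) M (tensorv (v s) (w t))).
Proof.
move=> MG_psd; pose x s t := tensorv (v s) (conjv (w t)).
pose f s t := complex.Re (braket (x s t) (ptranspose M) (x t s)).
pose g s t := complex.Re (braket (x s t) (ptranspose M) (x s t)).
have sym2 (h : I -> I -> R) :
    \sum_s \sum_t (h s t + h t s) = (\sum_s \sum_t h s t) *+ 2.
  rewrite (eq_bigr _ (fun s _ => big_split _ _ _ _ _)) big_split /=.
  by rewrite [X in _ + X]exchange_big /= mulr2n.
under eq_bigr => s _ do under eq_bigr => t _ do rewrite braket_ptranspose -/(f s t).
under [X in _ <= X]eq_bigr => s _ do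
  under eq_bigr => t _ do rewrite braket_ptranspose -/(g s t).
suff: \sum_s \sum_t (f s t + f t s) <= \sum_s \sum_t (g s t + g t s).
  by rewrite !sym2 lerMn2r.
apply: ler_sum => s _; apply: ler_sum => t _.
have := psd_Re_braket_ge0 (x s t - x t s) MG_psd.
by rewrite braketBl !braketBr !raddfB /f /g /=; lra.
Qed.

Lemma ppt_maxent_braket_le (I : finType) (v : I -> 'cV[C]_dB) (w : I -> 'cV[C]_dC)
    (M : 'M[C]_(dB * dC)) :
  orthonormal v -> orthonormal_or_zero w -> psdmx M -> psdmx (ptranspose M) ->
  complex.Re (braket (\sum_s tensorv (v s) (w s)) M (\sum_s tensorv (v s) (w s)))
    <= complex.Re (\tr M).
Proof.
move=> v_on w_on M_psd MG_psd; rewrite braket_suml raddf_sum /=.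
under eq_bigr => s _ do rewrite braket_sumr raddf_sum /=.
apply: le_trans (ppt_braket_sum_le v w MG_psd) _; rewrite pair_bigA /=.
exact: (bessel_psd (e := fun st => tensorv (v st.1) (w st.2)))
  (orthonormal_or_zero_tensorv v_on w_on).
Qed.

End Tensor.

Section RealInequalities.
Variable R : realType.

Lemma ln_le_subr1 (x : R) : 0 < x -> ln x <= x - 1.
Proof. by move=> x0; have := expR_ge1Dx (ln x); rewrite lnK ?posrE //; lra. Qed.

Lemma ln_sqrt (x : R) : 0 < x -> ln (Num.sqrt x) = ln x / 2.
Proof.
move=> x0; have sx0 : 0 < Num.sqrt x by rewrite sqrtr_gt0.
have := lnM (sx0 : _ \in Num.pos) sx0.
by rewrite -expr2 sqr_sqrtr ?ltW // => ->; field.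
Qed.

Lemma sum_sqrt_gt0 (I : finType) (lam : I -> R) :
  (forall s, 0 <= lam s) -> \sum_s lam s = 1 -> 0 < \sum_s Num.sqrt (lam s).
Proof.
move=> lam0 lam1; rewrite lt_def sumr_ge0 ?andbT => [|s _]; last exact: sqrtr_ge0.
apply: contra_eqN lam1 => /eqP /psumr_eq0P sqrt0.
have {}sqrt0 := sqrt0 (fun s _ => sqrtr_ge0 _).
rewrite big1 => [|s _]; first by rewrite eq_sym oner_eq0.
by apply/eqP; rewrite eq_le lam0 andbT -sqrtr_eq0 sqrt0.
Qed.

(* Gibbs' inequality against the distribution sqrt (lam s) / Z. *)
Lemma entropy_le_ln_sqr_sum_sqrt (I : finType) (lam : I -> R) :
  (forall s, 0 <= lam s) -> \sum_s lam s = 1 ->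
  - \sum_s lam s * ln (lam s) <= ln ((\sum_s Num.sqrt (lam s)) ^+ 2).
Proof.
move=> lam0 lam1; set Z := \sum_s Num.sqrt (lam s).
have Z0 : 0 < Z := sum_sqrt_gt0 lam0 lam1.
have gibbs s : lam s * (- ln (lam s) / 2 - ln Z) <= Num.sqrt (lam s) / Z - lam s.
  have [->|ls0] := eqVneq (lam s) 0; first by rewrite sqrtr0 !mul0r subrr.
  have {}ls0 : 0 < lam s by rewrite lt_def ls0 lam0.
  have sq0 : 0 < Num.sqrt (lam s) by rewrite sqrtr_gt0.
  have := ler_wpM2l (ltW ls0) (ln_le_subr1 (divr_gt0 (divr_gt0 sq0 Z0) ls0)).
  rewrite !ln_div ?posrE ?divr_gt0 // ln_sqrt //.
  have -> : lam s * (Num.sqrt (lam s) / Z / lam s - 1) = Num.sqrt (lam s) / Z - lam s.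
    by field; rewrite !gt_eqF.
  by congr (_ <= _); field.
have : \sum_s lam s * (- ln (lam s) / 2 - ln Z) <= \sum_s (Num.sqrt (lam s) / Z - lam s).
  by apply: ler_sum => s _; exact: gibbs.
rewrite sumrB -mulr_suml divff ?gt_eqF // lam1 subrr.
under eq_bigr => s _ do rewrite mulrBr.
rewrite sumrB -mulr_suml lam1 mul1r expr2 lnM ?posrE //.
under eq_bigr => s _ do rewrite mulrA mulrN mulNr.
by rewrite sumrN -mulr_suml; lra.
Qed.

Lemma sqr_sum_sqrt_ge_of_entropy (d : nat) (lam : 'I_d -> R) (delta : R) :
  0 <= delta -> (forall s, 0 <= lam s) -> \sum_s lam s = 1 ->
  log2 d%:R - delta <= - \sum_s xlogx (lam s) ->
  d%:R * (1 - delta) <= (\sum_s Num.sqrt (lam s)) ^+ 2.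
Proof.
move=> delta0; case: d lam => [|d] lam lam0 lam1 ent.
  by move: lam1; rewrite big_ord0 => /eqP; rewrite eq_sym oner_eq0.
have d0 : 0 < (d.+1%:R : R) := ltr0Sn _ _.
have ln2_0 : 0 < ln (2 : R) by rewrite ln_gt0 // ltr1n.
have ln2_le1 : ln (2 : R) <= 1 by have := ln_le_subr1 (ltr0n R 2); lra.
set Z2 := _ ^+ 2.
have Z2_0 : 0 < Z2 by rewrite exprn_gt0 // sum_sqrt_gt0.
have entropy_ln : ln d.+1%:R - delta * ln 2 <= ln Z2.
  apply: le_trans (entropy_le_ln_sqr_sum_sqrt lam0 lam1).
  have -> : - \sum_s lam s * ln (lam s) = (- \sum_s xlogx (lam s)) * ln 2.
    rewrite mulNr mulr_suml; congr (- _); apply: eq_bigr => s _.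
    by rewrite /xlogx /log2; case: eqP => [->|_]; rewrite ?mul0r // -mulrA divfK ?gt_eqF.
  by have := ler_wpM2r (ltW ln2_0) ent; rewrite mulrBl /log2 divfK ?gt_eqF.
have : - (delta * ln 2) <= ln (Z2 / d.+1%:R) by rewrite ln_div ?posrE //; lra.
rewrite -ler_expR lnK ?posrE ?divr_gt0 // => expR_le.
have : 1 - delta <= Z2 / d.+1%:R.
  apply: le_trans expR_le; apply: le_trans (expR_ge1Dx _).
  by rewrite lerD2l lerN2 ler_piMr.
by rewrite -ler_pdivlMl // mulrC.
Qed.

Lemma le_2sqrt_of_quadratic (a b c : R) : 0 <= a -> 0 <= c ->
  (forall r, 0 < r -> b * r <= a * r ^+ 2 + c) -> b <= 2 * Num.sqrt (a * c).
Proof.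
move=> a0 c0 quad; have [b_le0|b0] := lerP b 0.
  by apply: le_trans b_le0 _; rewrite mulr_ge0 ?sqrtr_ge0.
have [a_eq0|a_ne0] := eqVneq a 0.
  have := quad ((c + 1) / b) (divr_gt0 (ltr_wpDl c0 ltr01) b0).
  by rewrite a_eq0 mul0r add0r mulrC divfK ?gt_eqF //; lra.
have {}a0 : 0 < a by rewrite lt_def a_ne0 a0.
set r := b / (2 * a).
have r0 : 0 < r by rewrite divr_gt0 ?mulr_gt0.
have ar : a * r * 2 = b by rewrite /r; field; rewrite gt_eqF.
have quad_r := quad r r0.
have b2 : b ^+ 2 <= (2 * Num.sqrt (a * c)) ^+ 2.
  by rewrite exprMn sqr_sqrtr ?mulr_ge0 //; nra.
by move: b2; rewrite ler_sqr // nnegrE ?mulr_ge0 ?sqrtr_ge0 ?ltW.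
Qed.

(* With u = sqrt p, z = sqrt c, q = sqrt delta: F^2 u^2 + z^2 - u^2 <= q (1 - u^2),
   F u z <= u q, and q (1 - u^2) + 2 u q <= 2 q. *)
Lemma overlap_le (F p c delta : R) :
  0 <= F -> 0 <= p -> p <= 1 -> 0 <= c -> c <= 1 - F ^+ 2 ->
  1 - delta <= F ^+ 2 -> delta <= 1 ->
  F ^+ 2 * p + c + 2 * Num.sqrt (F ^+ 2 * p * c) <= p + 2 * Num.sqrt delta.
Proof.
move=> F0 p0 p1 c0 cF Fdelta delta1.
have delta0 : 0 <= delta by lra.
have sqrtE : Num.sqrt (F ^+ 2 * p * c) = F * Num.sqrt p * Num.sqrt c.
  by rewrite !sqrtrM ?mulr_ge0 ?sqr_ge0 // -expr2 sqr_sqrtr.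
have u1 : Num.sqrt p <= 1 by rewrite -sqrtr1 ler_sqrt.
have zq : Num.sqrt c <= Num.sqrt delta by rewrite ler_sqrt //; lra.
have q1 : Num.sqrt delta <= 1 by rewrite -sqrtr1 ler_sqrt.
rewrite sqrtE; move: (sqrtr_ge0 p) (sqrtr_ge0 c) (sqrtr_ge0 delta) u1 zq q1.
move: (sqr_sqrtr p0) (sqr_sqrtr c0) (sqr_sqrtr delta0).
move: (Num.sqrt p) (Num.sqrt c) (Num.sqrt delta) => u z q pE cE dE u0 z0 q0 u1 zq q1.
have qq : q ^+ 2 <= q by rewrite expr2 ler_piMl.
have main_term : F ^+ 2 * u ^+ 2 + z ^+ 2 - u ^+ 2 <= q * (1 - u ^+ 2).
  have : (1 - F ^+ 2) * (1 - u ^+ 2) <= q * (1 - u ^+ 2).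
    by rewrite ler_wpM2r //; nra.
  nra.
have F1 : F <= 1 by nra.
have cross_term : F * u * z <= u * q.
  rewrite -mulrA (le_trans (ler_piMl _ F1)) ?mulr_ge0 //.
  by rewrite ler_wpM2l.
have : 0 <= q * (1 - u) ^+ 2 by rewrite mulr_ge0 ?sqr_ge0.
nra.
Qed.

Lemma two_sqrt_le_sqrt2_root4 (delta : R) : 0 <= delta ->
  Num.sqrt 2 * powR delta (4%:R^-1) <= 1 ->
  2 * Num.sqrt delta <= Num.sqrt 2 * powR delta (4%:R^-1).
Proof.
move=> delta0; set t := powR delta _.
have t0 : 0 <= t := powR_ge0 _ _.
have t4 : delta = t ^+ 4.
  by rewrite -powR_mulrn // -powRrM mulVf ?powRr1 ?pnatr_eq0.
have -> : Num.sqrt delta = t ^+ 2.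
  by rewrite t4 (exprM t 2 2) sqrtr_sqr ger0_norm ?exprn_ge0.
have -> : 2 * t ^+ 2 = (Num.sqrt 2 * t) ^+ 2 by rewrite exprMn sqr_sqrtr.
by move=> st1; rewrite expr2 ler_piMl ?mulr_ge0 ?sqrtr_ge0.
Qed.

End RealInequalities.

Section Comparison.
Variable R : realType.
Local Notation C := R[i].
Local Notation "x %:C" := ((x%:C)%C : C) : ring_scope.

Lemma braket_cross_le n (M : 'M[C]_n) x y : psdmx M ->
  complex.Re (braket x M y + braket y M x) <=
  2 * Num.sqrt (complex.Re (braket x M x) * complex.Re (braket y M y)).
Proof.
move=> M_psd; apply: le_2sqrt_of_quadratic; rewrite ?psd_Re_braket_ge0 // => r _.
have := psd_Re_braket_ge0 (r%:C *: x - y) M_psd.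
rewrite braketBl !braketBr !braketZl !braketZr conj_realC !raddfB !raddfD /=.
by rewrite !Re_realM; lra.
Qed.

(* With phi = F Phi + y, the cross terms are controlled by Cauchy-Schwarz and
   |y|^2 = 1 - 2 F^2 + F^2 |Phi|^2 <= 1 - F^2 <= delta. *)
Lemma braket_le_of_overlap n (M : 'M[C]_n) (phi Phi : 'cV[C]_n) (F delta : R) :
  psdmx M -> psdmx (1%:M - M) -> inner phi phi = 1 ->
  complex.Re (inner Phi Phi) <= 1 -> inner phi Phi = F%:C -> 0 <= F ->
  1 - delta <= F ^+ 2 ->
  complex.Re (braket phi M phi) <= complex.Re (braket Phi M Phi) + 2 * Num.sqrt delta.
Proof.
move=> M_psd IM_psd phi1 Phi1 overlap F0 F_delta.
have p0 : 0 <= complex.Re (braket Phi M Phi) := psd_Re_braket_ge0 Phi M_psd.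
have [delta1|delta1] := ltrP 1 delta.
  have := braket_le1 phi1 IM_psd.
  have : 1 <= Num.sqrt delta by rewrite -sqrtr1 ler_sqrt; lra.
  lra.
pose x := F%:C *: Phi; pose y := phi - x.
have phiE : phi = x + y by rewrite addrC subrK.
have y_norm : complex.Re (inner y y) = 1 - 2 * F ^+ 2 + F ^+ 2 * complex.Re (inner Phi Phi).
  rewrite /inner braketBl !braketBr !braketZl !braketZr -!/(inner _ _) phi1 overlap.
  rewrite inner_conj overlap !conj_realC !raddfB /= !Re_realM /= expr2; lra.
have x_M : complex.Re (braket x M x) = F ^+ 2 * complex.Re (braket Phi M Phi).
  by rewrite braketZl braketZr conj_realC mulrA -rmorphM Re_realM expr2.
have phi_M : complex.Re (braket phi M phi) = complex.Re (braket x M x) +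
    complex.Re (braket x M y + braket y M x) + complex.Re (braket y M y).
  by rewrite phiE braketDl !braketDr !raddfD /=; lra.
have cross := braket_cross_le x y M_psd.
have y_M := braket_le_inner y IM_psd.
have y_M0 : 0 <= complex.Re (braket y M y) := psd_Re_braket_ge0 y M_psd.
have F_Phi : F ^+ 2 * complex.Re (inner Phi Phi) <= F ^+ 2 by rewrite ler_piMr ?sqr_ge0.
have Phi_M := braket_le_inner Phi IM_psd.
rewrite phi_M x_M; rewrite x_M in cross.
have y_M1 : complex.Re (braket y M y) <= 1 - F ^+ 2.
  by apply: (le_trans y_M); rewrite y_norm; lra.
have := overlap_le F0 p0 (le_trans Phi_M Phi1) y_M0 y_M1 F_delta delta1.
lra.
Qed.

End Comparison.

Section Schmidt.
Variable R : realType.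
Local Notation C := R[i].
Local Notation "x %:C" := ((x%:C)%C : C) : ring_scope.
Variables dB dC : nat.

Definition reduced_spectrum (phi : 'cV[C]_(dB * dC)) (s : 'I_dB) : R :=
  complex.Re (spectral_diag (ptraceC (proj phi)) 0 s).

(* Diagonalizing tr_C |phi><phi| = A A^* by a unitary P, the rows of P A are
   orthogonal with squared norms the reduced spectrum. *)
Lemma schmidt_rows (phi : 'cV[C]_(dB * dC)) :
  exists2 v : 'I_dB -> 'cV[C]_dB, orthonormal v &
  exists2 b : 'I_dB -> 'cV[C]_dC,
    (forall s t, inner (b s) (b t) = (reduced_spectrum phi s)%:C *+ (s == t)) &
    phi = \sum_s tensorv (v s) (b s).
Proof.
pose A : 'M[C]_(dB, dC) := \matrix_(i, j) phi (tidx i j) 0.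
have rhoE : ptraceC (proj phi) = A *m adj A.
  apply/matrixP => i k; rewrite !mxE; apply: eq_bigr => j _.
  by rewrite !mxE big_ord1 /adj !mxE.
rewrite /reduced_spectrum; set rho := ptraceC _ in rhoE *.
have rho_normal : rho \is normalmx.
  by apply/normalmxP; rewrite adjmx_trmx rhoE adjmxM adjmxK.
set P := spectralmx rho; set D := spectral_diag rho.
have P_unitary : P \is unitarymx := spectral_unitarymx rho.
have PP : P *m adj P = 1%:M by rewrite -adjmx_trmx; apply/unitarymxP.
have rhoD : rho = adj P *m diag_mx D *m P.
  by rewrite -adjmx_trmx -invmx_unitary //; exact/orthomx_spectralP.
pose B := P *m A.
have BB s t : \sum_j B s j * (B t j)^* = D 0 s *+ (s == t).
  have : B *m adj B = diag_mx D.
    rewrite adjmxM !mulmxA -(mulmxA P) -rhoE rhoD.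
    by rewrite !mulmxA PP mul1mx -mulmxA PP mulmx1.
  move/matrixP/(_ s t); rewrite !mxE => <-.
  by apply: eq_bigr => j _; rewrite /adj !mxE.
have D_real s : (complex.Re (D 0 s))%:C = D 0 s.
  apply: ge0_ReK; have := BB s s; rewrite eqxx mulr1n => <-.
  by apply: sumr_ge0 => j _; exact: mulcJ_ge0.
exists (fun s => \col_i (P s i)^*).
  move=> s t; rewrite innerE; move/matrixP/(_ s t): PP; rewrite !mxE => <-.
  by apply: eq_bigr => i _; rewrite !mxE conjCK.
exists (fun s => \col_j B s j).
  move=> s t; rewrite innerE (eq_bigr (fun j => B t j * (B s j)^*)) => [|j _].
    by rewrite BB eq_sym; case: eqVneq => [->|_]; rewrite ?mulr1n ?mulr0n ?D_real.
  by rewrite !mxE mulrC.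
apply: cV_tidxP => i j; rewrite summxE.
have -> : phi (tidx i j) 0 = (adj P *m B) i j.
  by rewrite /B mulmxA (mulmx1C PP) mul1mx mxE.
by rewrite mxE; apply: eq_bigr => s _; rewrite tensorvE /adj !mxE.
Qed.

(* The normalized factors use the junk value 0^-1 = 0: w s = 0 exactly when lam s = 0. *)
Lemma schmidt_decomposition (phi : 'cV[C]_(dB * dC)) :
  exists2 v : 'I_dB -> 'cV[C]_dB, orthonormal v &
  exists2 w : 'I_dB -> 'cV[C]_dC, orthonormal_or_zero w &
    [/\ forall s, 0 <= reduced_spectrum phi s,
        forall s, w s = 0 -> reduced_spectrum phi s = 0 &
        phi = \sum_s tensorv (v s) ((Num.sqrt (reduced_spectrum phi s))%:C *: w s)].
Proof.
have [v v_on [b b_orth phiE]] := schmidt_rows phi.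
set lam := reduced_spectrum phi in b_orth *.
have b_norm s : inner (b s) (b s) = (lam s)%:C by rewrite b_orth eqxx mulr1n.
have lam0 s : 0 <= lam s by rewrite -ler0c -b_norm inner_ge0.
pose w s := ((Num.sqrt (lam s))^-1)%:C *: b s.
have w_inner s t : inner (w s) (w t) = ((s == t) && (lam s != 0))%:R.
  rewrite /w innerZl innerZr b_orth conj_realC.
  case: eqVneq => [<-|_]; last by rewrite mulr0n !mulr0.
  rewrite mulr1n -!rmorphM -(rmorph_nat (real_complex R)); congr (_%:C).
  have [->|lam_ne0] := eqVneq (lam s) 0; first by rewrite !mulr0.
  have sqrt_ne0 : Num.sqrt (lam s) != 0.
    by rewrite gt_eqF // sqrtr_gt0 lt_def lam_ne0 lam0.
  by rewrite mulrA -invfM -expr2 sqr_sqrtr ?lam0 // mulVf.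
have w_eq0 s : (w s == 0) = (lam s == 0).
  by rewrite -inner_eq0 w_inner eqxx pnatr_eq0 eqb0 negbK.
exists v => //; exists w => [s t|]; first by rewrite w_inner w_eq0.
split=> // [s /eqP|]; first by rewrite w_eq0 => /eqP.
rewrite {1}phiE; apply: eq_bigr => s _; congr tensorv; rewrite scalerA -rmorphM.
have [lam_eq0|lam_ne0] := eqVneq (lam s) 0.
  have -> : b s = 0 by apply/eqP; rewrite -inner_eq0 b_norm lam_eq0.
  by rewrite scaler0.
by rewrite divff ?scale1r // gt_eqF // sqrtr_gt0 lt_def lam_ne0 lam0.
Qed.

Lemma sum_reduced_spectrum (phi : 'cV[C]_(dB * dC)) :
  unit_ket phi -> \sum_s reduced_spectrum phi s = 1.
Proof.
move=> /unit_ket_inner; have [v v_on [b b_orth phiE]] := schmidt_rows phi.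
rewrite {1 2}phiE inner_sum_tensorv //.
under eq_bigr do rewrite b_orth eqxx mulr1n.
by rewrite -rmorph_sum -(rmorph1 (real_complex R)) => /complexI.
Qed.

Lemma unit_ket_dim_gt0 (phi : 'cV[C]_(dB * dC)) : unit_ket phi -> (0 < dB)%N.
Proof.
move=> /sum_reduced_spectrum lam1; rewrite -[dB]card_ord lt0n.
apply: contra_eqN lam1 => /eqP /card0_eq dB0.
by rewrite big_pred0 // eq_sym oner_eq0.
Qed.

Lemma trace_proj_braket (phi : 'cV[C]_(dB * dC)) M :
  \tr (proj phi *m M) = braket phi M phi.
Proof. by rewrite braket_trace. Qed.

End Schmidt.

Section PerState.
Variable R : realType.
Local Notation C := R[i].
Local Notation "x %:C" := ((x%:C)%C : C) : ring_scope.
Variables dB dC : nat.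

(* Compare phi with the maximally entangled state Phi built on its Schmidt bases. *)
Lemma ppt_braket_le (phi : 'cV[C]_(dB * dC)) (M : 'M[C]_(dB * dC)) (delta : R) :
  unit_ket phi -> log2 dB%:R - delta <= ent_entropy phi -> 0 <= delta ->
  psdmx M -> psdmx (1%:M - M) -> psdmx (ptranspose M) ->
  complex.Re (braket phi M phi) <= complex.Re (\tr M) / dB%:R + 2 * Num.sqrt delta.
Proof.
move=> phi_unit ent delta0 M_psd IM_psd MG_psd.
have [v v_on [w w_on [lam0 w0 phiE]]] := schmidt_decomposition phi.
have lam1 := sum_reduced_spectrum phi_unit.
have {}ent : log2 dB%:R - delta <= - \sum_s xlogx (reduced_spectrum phi s) := ent.
set lam := reduced_spectrum phi in lam0 w0 phiE lam1 ent.
have dB_gt0 : 0 < (dB%:R : R) by rewrite ltr0n (unit_ket_dim_gt0 phi_unit).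
pose c : R := (Num.sqrt dB%:R)^-1.
have c0 : 0 <= c by rewrite invr_ge0 sqrtr_ge0.
have cc : c ^+ 2 = dB%:R^-1 by rewrite exprVn sqr_sqrtr ?ler0n.
have w_norm s : inner (w s) (w s) = ((w s != 0)%:R : R)%:C.
  by rewrite w_on eqxx rmorph_nat.
pose Phi := c%:C *: \sum_s tensorv (v s) (w s).
have PhiE : Phi = \sum_s tensorv (v s) (c%:C *: w s).
  by rewrite /Phi scaler_sumr; apply: eq_bigr => s _; rewrite tensorvZr.
have Phi_norm : complex.Re (inner Phi Phi) <= 1.
  rewrite PhiE inner_sum_tensorv // raddf_sum (@le_trans _ _ (\sum_(s < dB) c ^+ 2)) //.
    apply: ler_sum => s _; rewrite innerZl innerZr w_norm conj_realC -!rmorphM /=.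
    by rewrite mulrA -expr2 ler_piMr ?sqr_ge0 // lern1 leq_b1.
  by rewrite sumr_const card_ord cc -[_ *+ dB]mulr_natr mulVf ?lt0r_neq0.
have overlap : inner phi Phi = (c * \sum_s Num.sqrt (lam s))%:C.
  rewrite {1}phiE PhiE inner_sum_tensorv // mulr_sumr rmorph_sum.
  apply: eq_bigr => s _; rewrite innerZl innerZr w_norm !conj_realC -!rmorphM.
  have [/w0 ->|] := eqVneq (w s) 0; first by rewrite sqrtr0 !mul0r mulr0.
  by rewrite mulr1 mulrC.
have F_delta : 1 - delta <= (c * \sum_s Num.sqrt (lam s)) ^+ 2.
  rewrite exprMn cc -(ler_pM2l dB_gt0) mulrA mulfV ?mul1r ?lt0r_neq0 //.
  exact: sqr_sum_sqrt_ge_of_entropy.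
apply: le_trans (braket_le_of_overlap M_psd IM_psd (unit_ket_inner phi_unit)
  Phi_norm overlap (mulr_ge0 c0 (sumr_ge0 _ (fun s _ => sqrtr_ge0 _))) F_delta) _.
rewrite lerD2r braketZl braketZr conj_realC mulrA -rmorphM Re_realM -expr2 cc mulrC.
rewrite ler_wpM2r ?invr_ge0 ?ler0n //.
exact: ppt_maxent_braket_le.
Qed.

End PerState.

Section POVMs.
Variable R : realType.
Local Notation C := R[i].

Lemma povm_complement_psd n N (M : 'I_N -> 'M[C]_n) k :
  POVM M -> psdmx (1%:M - M k).
Proof.
move=> [M_psd M_sum]; rewrite -M_sum (bigD1 k) //= addrAC subrr add0r.
exact: psdmx_sum.
Qed.

Lemma povm_sum_trace n N (M : 'I_N -> 'M[C]_n) :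
  POVM M -> \sum_k complex.Re (\tr (M k)) = n%:R.
Proof.
by move=> [_ M_sum]; rewrite -!raddf_sum /= M_sum mxtrace1 -(rmorph_nat (real_complex R)).
Qed.

End POVMs.

Unset Implicit Arguments.
Set Strict Implicit.

Theorem mainTheorem5 (R : realType) (dB dC N : nat) (delta eps : R)
  (phi : 'I_N -> 'cV[R[i]]_(dB * dC)) (M : 'I_N -> 'M[R[i]]_(dB * dC)) :
  (dB <= dC)%N ->
  0 <= delta ->
  (forall k, unit_ket (phi k)) ->
  (forall k, ent_entropy (phi k) >= log2 dB%:R - delta) ->
  POVM M ->
  (forall k, PPT (M k)) ->
  (forall k, complex.Re (\tr (proj (phi k) *m M k)) >= 1 - eps) ->
  eps + Num.sqrt 2 * powR delta (4%:R^-1) < 1 ->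
  N%:R <= (1 - eps - Num.sqrt 2 * powR delta (4%:R^-1))^-1 * dC%:R.
Proof.
(* The bound does not use d_B <= d_C. *)
move=> _ delta0 phi_unit ent M_povm M_ppt M_tr.
set s := Num.sqrt 2 * _ => eps_s.
have [->|N_gt0] := posnP N; first by rewrite mulr_ge0 ?invr_ge0 ?ler0n //; lra.
pose k0 := Ordinal N_gt0.
have IM_psd k := povm_complement_psd k M_povm.
have eps0 : 0 <= eps.
  have := braket_le1 (unit_ket_inner (phi_unit k0)) (IM_psd k0).
  by have := M_tr k0; rewrite trace_proj_braket; lra.
have per k : complex.Re (braket (phi k) (M k) (phi k)) <= complex.Re (\tr (M k)) / dB%:R + s.
  apply: le_trans (ppt_braket_le (phi_unit k) (ent k) delta0 (M_povm.1 k) (IM_psd k) (M_ppt k)) _.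
  by rewrite lerD2l; apply: two_sqrt_le_sqrt2_root4 => //; rewrite -/s; lra.
have : \sum_(k < N) (1 - eps) <= \sum_k (complex.Re (\tr (M k)) / dB%:R + s).
  by apply: ler_sum => k _; rewrite (le_trans (M_tr k)) // trace_proj_braket.
have dB_gt0 : 0 < (dB%:R : R) by rewrite ltr0n (unit_ket_dim_gt0 (phi_unit k0)).
rewrite sumr_const big_split /= -mulr_suml (povm_sum_trace M_povm) sumr_const !card_ord.
rewrite -[(1 - eps) *+ N]mulr_natl -[s *+ N]mulr_natl.
rewrite natrM mulrAC mulfV ?mul1r ?lt0r_neq0 // => counting.
by rewrite -(ler_pM2l (_ : 0 < 1 - eps - s)) ?mulrA ?mulfV ?mul1r ?subr_gt0 //; lra.
Qed.
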